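(* With $P=K\overline{K}$ and $Q=L\overline{L}$, the following set of monomials is a basis of the vector space $U_{K,L,norm}$: $\{PK^iE^jF^k\}_{i,j,k\ge0}\cup\{\overline{K}^iE^jF^k\}_{i>0,\,j,k\ge0}\cup\{QL^iE^jF^k\}_{i,j,k\ge0}\cup\{\overline{L}^iE^jF^k\}_{i>0,\,j,k\ge0}$.
   Context: Fix $q\in\mathbb{C}$, $q\neq 0,\pm1$. $U_{K,L,norm}$ is the unital associative $\mathbb{C}$-algebra generated by $K,\overline{K},L,\overline{L},E,F$ subject to $K\overline{K}K=K$, $\overline{K}K\overline{K}=\overline{K}$, $K\overline{K}=\overline{K}K$, $L\overline{L}L=L$, $\overline{L}L\overline{L}=\overline{L}$, $L\overline{L}=\overline{L}L$, $K\overline{K}+L\overline{L}=\mathbf{1}$, $KE=q^2EK$, $LE=q^2EL$, $\overline{K}E=q^{-2}E\overline{K}$, $\overline{L}E=q^{-2}E\overline{L}$, $KF=q^{-2}FK$, $LF=q^{-2}FL$, $\overline{K}F=q^2F\overline{K}$, $\overline{L}F=q^2F\overline{L}$, $EF-FE=\frac{(K+L)-(\overline{K}+\overline{L})}{q-q^{-1}}$. Here $PK^0=P$, $QL^0=Q$. *)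

From HB Require Import structures.
From mathcomp Require Import all_boot all_order all_algebra.
Set Implicit Arguments. Unset Strict Implicit. Unset Printing Implicit Defensive.
Import Order.TTheory GRing.Theory Num.Theory.
Local Open Scope ring_scope.

Definition gen := 'I_6.
Definition gK  : gen := @Ordinal 6 0 isT.
Definition gKb : gen := @Ordinal 6 1 isT.
Definition gL  : gen := @Ordinal 6 2 isT.
Definition gLb : gen := @Ordinal 6 3 isT.
Definition gE  : gen := @Ordinal 6 4 isT.
Definition gF  : gen := @Ordinal 6 5 isT.

Definition word := seq gen.

(* Elements of the free algebra C<K,Kb,L,Lb,E,F> are given by their
   coefficient function on words (only finitely supported ones arise). *)
Section FreeAlg.
Variable R : fieldType.

Definition fel := word -> R.
Definition fzero : fel := fun _ => 0.
Definition fadd (f g : fel) : fel := fun u => f u + g u.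
Definition fopp (f : fel) : fel := fun u => - f u.
Definition fsub (f g : fel) : fel := fadd f (fopp g).
Definition fscale (c : R) (f : fel) : fel := fun u => c * f u.
Definition delta (w : word) : fel := fun u => if u == w then 1 else 0.
Definition lmulw (a : word) (f : fel) : fel :=
  fun u => if take (size a) u == a then f (drop (size a) u) else 0.
Definition rmulw (b : word) (f : fel) : fel :=
  fun u => if drop (size u - size b) u == b then f (take (size u - size b) u)
           else 0.
End FreeAlg.

Arguments fzero {R}.

Section Relations.
Variable R : fieldType.
Variable q : R.

Local Notation d := (@delta R).

Definition relators : seq (fel R) := [::
  fsub (d [:: gK; gKb; gK]) (d [:: gK]);
  fsub (d [:: gKb; gK; gKb]) (d [:: gKb]);
  fsub (d [:: gK; gKb]) (d [:: gKb; gK]);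
  fsub (d [:: gL; gLb; gL]) (d [:: gL]);
  fsub (d [:: gLb; gL; gLb]) (d [:: gLb]);
  fsub (d [:: gL; gLb]) (d [:: gLb; gL]);
  fsub (fadd (d [:: gK; gKb]) (d [:: gL; gLb])) (d [::]);
  fsub (d [:: gK; gE]) (fscale (q ^+ 2) (d [:: gE; gK]));
  fsub (d [:: gL; gE]) (fscale (q ^+ 2) (d [:: gE; gL]));
  fsub (d [:: gKb; gE]) (fscale (q ^- 2) (d [:: gE; gKb]));
  fsub (d [:: gLb; gE]) (fscale (q ^- 2) (d [:: gE; gLb]));
  fsub (d [:: gK; gF]) (fscale (q ^- 2) (d [:: gF; gK]));
  fsub (d [:: gL; gF]) (fscale (q ^- 2) (d [:: gF; gL]));
  fsub (d [:: gKb; gF]) (fscale (q ^+ 2) (d [:: gF; gKb]));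
  fsub (d [:: gLb; gF]) (fscale (q ^+ 2) (d [:: gF; gLb]));
  fsub (fsub (d [:: gE; gF]) (d [:: gF; gE]))
       (fscale (q - q^-1)^-1
          (fsub (fadd (d [:: gK]) (d [:: gL])) (fadd (d [:: gKb]) (d [:: gLb]))))
].

Inductive inI : fel R -> Prop :=
  | inI0 : inI fzero
  | inIadd f g : inI f -> inI g -> inI (fadd f g)
  | inIscale c f : inI f -> inI (fscale c f)
  | inIgen (n : nat) (a b : word) : (n < size relators)%N ->
      inI (lmulw a (rmulw b (nth fzero relators n))).
End Relations.

(* Indices of the proposed basis: (t, i, j, k) with
   t = 0 : P K^i E^j F^k        (i >= 0)
   t = 1 : Kbar^i E^j F^k       (i > 0)
   t = 2 : Q L^i E^j F^k        (i >= 0)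
   t = 3 : Lbar^i E^j F^k       (i > 0)    where P = K Kbar, Q = L Lbar. *)
Definition bidx := ('I_4 * nat * nat * nat)%type.

Definition admissible (b : bidx) : bool :=
  let: (t, i, _, _) := b in
  ((val t == 1%N) || (val t == 3%N)) ==> (0 < i)%N.

Definition bword (b : bidx) : word :=
  let: (t, i, j, k) := b in
  let pre :=
    match val t with
    | 0 => [:: gK; gKb] ++ nseq i gK
    | 1 => nseq i gKb
    | 2 => [:: gL; gLb] ++ nseq i gL
    | _ => nseq i gLb
    end in
  pre ++ nseq j gE ++ nseq k gF.

Definition lincomb (R : fieldType) (s : seq (bidx * R)) : fel R :=
  foldr (fun p acc => fadd (fscale p.2 (delta R (bword p.1))) acc) fzero s.

(* By induction on words it suffices that a generator
   times a basis monomial is spanned (spanw_cons).  The relations among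
   K, Kb, L, Lb (torus_rels) make these "toral" generators commute and send
   the prefixes P K^i, Kb^i to each other or to 0 under left multiplication
   (toral_times_prefix); E and F q-commute with them (swaps_E, swaps_F), so
   they pass through the toral prefix, and F E^j F^k is then straightened
   with the relation EF - FE = (K + L - Kb - Lb)/(q - q^-1) (spanw_prefix_F).

   Left multiplication written in the proposed basis defines
   operators on coefficient vectors V = X -> C satisfying all the defining
   relations (section Representation), so every element of the ideal acts as
   zero (ideal_annihilated).  Applied to the vector of 1 = P + Q a basis
   monomial gives its own coordinate vector (actw_bword), hence a
   combination of basis monomials lying in the ideal has zero coefficients. *)

From HB Require Import structures.
From mathcomp Require Import all_boot all_order all_algebra ring.
From Stdlib Require Import FunctionalExtensionality.
Set Implicit Arguments. Unset Strict Implicit. Unset Printing Implicit Defensive.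
Import Order.TTheory GRing.Theory Num.Theory.
Local Open Scope ring_scope.

Ltac fel_ext := apply: functional_extensionality => ?.

Section FreeAlgebra.
Variables (C : fieldType) (q : C).
Local Notation d := (delta C).
Implicit Types (f g h : fel C) (a b : word).

Definition felc (l : seq (word * C)) : fel C :=
  foldr (fun p acc => fadd (fscale p.2 (d p.1)) acc) fzero l.

Definition eqv f g := inI q (fsub f g).

Lemma eqv_eq f g : f = g -> eqv f g.
Proof.
move->; rewrite /eqv (_ : fsub g g = fzero); first exact: inI0.
by fel_ext; rewrite /fsub /fadd /fopp subrr.
Qed.

Lemma eqv_sym f g : eqv f g -> eqv g f.
Proof.
move/(inIscale (-1)); congr inI.
by fel_ext; rewrite /fsub /fadd /fopp /fscale mulN1r opprD opprK addrC.
Qed.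

Lemma eqv_trans g f h : eqv f g -> eqv g h -> eqv f h.
Proof.
move=> fg gh; move: (inIadd fg gh); congr inI.
by fel_ext; rewrite /fsub /fadd /fopp addrA subrK.
Qed.

Lemma eqv_add f1 f2 g1 g2 :
  eqv f1 g1 -> eqv f2 g2 -> eqv (fadd f1 f2) (fadd g1 g2).
Proof.
move=> e1 e2; move: (inIadd e1 e2); congr inI.
by fel_ext; rewrite /fsub /fadd /fopp opprD addrACA.
Qed.

Lemma eqv_scale c f g : eqv f g -> eqv (fscale c f) (fscale c g).
Proof.
move/(inIscale c); congr inI.
by fel_ext; rewrite /fsub /fadd /fopp /fscale mulrDr mulrN.
Qed.

Lemma eqv_cancel A B D : eqv (fadd A B) D -> eqv A D -> eqv B fzero.
Proof.
move=> e1 e2; move: (inIadd e1 (inIscale (-1) e2)); congr inI.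
fel_ext; rewrite /fsub /fadd /fopp /fscale /fzero; ring.
Qed.

Lemma lmulw_delta a w : lmulw a (d w) = d (a ++ w).
Proof.
apply: functional_extensionality => x; rewrite /lmulw /delta.
case: (eqVneq (take (size a) x) a) => Ha.
  by rewrite -{2}(cat_take_drop (size a) x) Ha eqseq_cat ?eqxx.
by case: eqP => // Hx; rewrite Hx take_size_cat ?eqxx in Ha.
Qed.

Lemma rmulw_delta b w : rmulw b (d w) = d (w ++ b).
Proof.
apply: functional_extensionality => x; rewrite /rmulw /delta.
case: (eqVneq x (w ++ b)) => [->|Hx].
  by rewrite size_cat addnK drop_size_cat // take_size_cat // !eqxx.
case: ifP => // /eqP Hb; case: ifP => // /eqP Hw; exfalso; move/eqP: Hx; apply.
by rewrite -Hw -{2}Hb cat_take_drop.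
Qed.

Lemma lmulw_lmulw a b f : lmulw a (lmulw b f) = lmulw (a ++ b) f.
Proof.
apply: functional_extensionality => x; rewrite /lmulw size_cat drop_drop addnC.
case: (eqVneq (take (size a) x) a) => Ha.
  rewrite takeD Ha eqseq_cat // eqxx /=; by case: ifP.
case: ifP => // /eqP Hx; case/eqP: Ha.
by rewrite -[in RHS](take_size_cat b (erefl (size a))) -Hx take_takel // leq_addr.
Qed.

Lemma lmulw_zero a : lmulw a (@fzero C) = fzero.
Proof. by fel_ext; rewrite /lmulw /fzero; case: ifP. Qed.
Lemma rmulw_zero b : rmulw b (@fzero C) = fzero.
Proof. by fel_ext; rewrite /rmulw /fzero; case: ifP. Qed.
Lemma lmulw_add a f g : lmulw a (fadd f g) = fadd (lmulw a f) (lmulw a g).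
Proof. by fel_ext; rewrite /lmulw /fadd; case: ifP => // _; rewrite addr0. Qed.
Lemma rmulw_add b f g : rmulw b (fadd f g) = fadd (rmulw b f) (rmulw b g).
Proof. by fel_ext; rewrite /rmulw /fadd; case: ifP => // _; rewrite addr0. Qed.
Lemma lmulw_scale a c f : lmulw a (fscale c f) = fscale c (lmulw a f).
Proof. by fel_ext; rewrite /lmulw /fscale; case: ifP => // _; rewrite mulr0. Qed.
Lemma rmulw_scale b c f : rmulw b (fscale c f) = fscale c (rmulw b f).
Proof. by fel_ext; rewrite /rmulw /fscale; case: ifP => // _; rewrite mulr0. Qed.
Lemma lmulw_opp a f : lmulw a (fopp f) = fopp (lmulw a f).
Proof. by fel_ext; rewrite /lmulw /fopp; case: ifP => // _; rewrite oppr0. Qed.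
Lemma rmulw_opp b f : rmulw b (fopp f) = fopp (rmulw b f).
Proof. by fel_ext; rewrite /rmulw /fopp; case: ifP => // _; rewrite oppr0. Qed.

Definition mulwE := (lmulw_add, rmulw_add, lmulw_scale, rmulw_scale,
  lmulw_opp, rmulw_opp, lmulw_delta, rmulw_delta).

Lemma eqv_lmulw a f g : eqv f g -> eqv (lmulw a f) (lmulw a g).
Proof.
have inI_lmulw h : inI q h -> inI q (lmulw a h).
  elim=> [|f1 f2 _ H1 _ H2|c f1 _ H|n a' b Hn].
  - by rewrite lmulw_zero; exact: inI0.
  - by rewrite lmulw_add; exact: inIadd.
  - by rewrite lmulw_scale; exact: inIscale.
  - by rewrite lmulw_lmulw; exact: inIgen.
by move/inI_lmulw; rewrite /eqv /fsub lmulw_add lmulw_opp.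
Qed.

Lemma fsubE f g : fsub f g = fadd f (fscale (-1) g).
Proof. by fel_ext; rewrite /fsub /fadd /fopp /fscale mulN1r. Qed.

Lemma delta_felc w : d w = felc [:: (w, 1)].
Proof. by fel_ext; rewrite /= /fadd /fscale /fzero mul1r addr0. Qed.

Lemma felc_cat l1 l2 : felc (l1 ++ l2) = fadd (felc l1) (felc l2).
Proof.
elim: l1 => [|p l IH] /=; first by fel_ext; rewrite /fadd /fzero add0r.
by rewrite IH; fel_ext; rewrite /fadd addrA.
Qed.

Lemma felc_scale c l :
  felc (map (fun p => (p.1, c * p.2)) l) = fscale c (felc l).
Proof.
elim: l => [|p l IH] /=; first by fel_ext; rewrite /fscale /fzero mulr0.
by rewrite IH; fel_ext; rewrite /fadd /fscale mulrDr mulrA.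
Qed.

Lemma felc_lmulw a l :
  lmulw a (felc l) = felc (map (fun p => (a ++ p.1, p.2)) l).
Proof.
elim: l => [|p l IH] /=; first by rewrite lmulw_zero.
by rewrite lmulw_add lmulw_scale lmulw_delta IH.
Qed.

Lemma felc_ctx a b l :
  lmulw a (rmulw b (felc l)) = felc (map (fun p => (a ++ p.1 ++ b, p.2)) l).
Proof.
elim: l => [|p l IH] /=; first by rewrite rmulw_zero lmulw_zero.
by rewrite !mulwE IH catA.
Qed.

Lemma felc_pairing l (W : seq word) (F : word -> C) :
  uniq W -> {subset map fst l <= W} ->
  \sum_(u <- W) felc l u * F u = \sum_(p <- l) p.2 * F p.1.
Proof.
elim: l => [|[m c] l IH] uW sub /=.
  by rewrite big_nil big1 // => u _; rewrite /fzero mul0r.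
rewrite big_cons /= -IH // => [|u hu]; last by apply: sub; rewrite inE hu orbT.
rewrite /fadd /fscale; under eq_bigr do rewrite mulrDl.
rewrite big_split /= (bigD1_seq m) ?sub ?mem_head //= /delta eqxx mulr1.
by rewrite big1 ?addr0 // => u /negbTE->; rewrite mulr0 mul0r.
Qed.

(* Hence a function on words extends well-definedly to combinations. *)
Lemma felc_sum_eq l1 l2 (F : word -> C) : felc l1 = felc l2 ->
  \sum_(p <- l1) p.2 * F p.1 = \sum_(p <- l2) p.2 * F p.1.
Proof.
move=> e; set W := undup (map fst l1 ++ map fst l2).
rewrite -!(@felc_pairing _ W) ?undup_uniq ?e // => u hu;
  by rewrite mem_undup mem_cat hu ?orbT.
Qed.

Lemma lincomb_felc (s : seq (bidx * C)) :
  lincomb s = felc (map (fun p => (bword p.1, p.2)) s).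
Proof. by elim: s => //= p s ->. Qed.

End FreeAlgebra.

Section Relations.
Variables (C : fieldType) (q : C).
Local Notation d := (delta C).
Local Notation eqv := (eqv q).
Local Notation a := (q - q^-1)^-1.

Ltac relator n :=
  have := @inIgen C q n%N u v isT; rewrite /= /fsub !mulwE; exact.

Lemma rel_KKbK u v : eqv (d (u ++ [:: gK; gKb; gK] ++ v)) (d (u ++ [:: gK] ++ v)).
Proof. by relator 0%N. Qed.
Lemma rel_KbKKb u v : eqv (d (u ++ [:: gKb; gK; gKb] ++ v)) (d (u ++ [:: gKb] ++ v)).
Proof. by relator 1%N. Qed.
Lemma rel_KKb u v : eqv (d (u ++ [:: gK; gKb] ++ v)) (d (u ++ [:: gKb; gK] ++ v)).
Proof. by relator 2%N. Qed.
Lemma rel_LLbL u v : eqv (d (u ++ [:: gL; gLb; gL] ++ v)) (d (u ++ [:: gL] ++ v)).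
Proof. by relator 3%N. Qed.
Lemma rel_LbLLb u v : eqv (d (u ++ [:: gLb; gL; gLb] ++ v)) (d (u ++ [:: gLb] ++ v)).
Proof. by relator 4%N. Qed.
Lemma rel_LLb u v : eqv (d (u ++ [:: gL; gLb] ++ v)) (d (u ++ [:: gLb; gL] ++ v)).
Proof. by relator 5%N. Qed.
Lemma rel_PQ u v :
  eqv (fadd (d (u ++ [:: gK; gKb] ++ v)) (d (u ++ [:: gL; gLb] ++ v))) (d (u ++ v)).
Proof. by relator 6%N. Qed.
Lemma rel_KE u v : eqv (d (u ++ [:: gK; gE] ++ v)) (fscale (q ^+ 2) (d (u ++ [:: gE; gK] ++ v))).
Proof. by relator 7%N. Qed.
Lemma rel_LE u v : eqv (d (u ++ [:: gL; gE] ++ v)) (fscale (q ^+ 2) (d (u ++ [:: gE; gL] ++ v))).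
Proof. by relator 8%N. Qed.
Lemma rel_KbE u v : eqv (d (u ++ [:: gKb; gE] ++ v)) (fscale (q ^- 2) (d (u ++ [:: gE; gKb] ++ v))).
Proof. by relator 9%N. Qed.
Lemma rel_LbE u v : eqv (d (u ++ [:: gLb; gE] ++ v)) (fscale (q ^- 2) (d (u ++ [:: gE; gLb] ++ v))).
Proof. by relator 10%N. Qed.
Lemma rel_KF u v : eqv (d (u ++ [:: gK; gF] ++ v)) (fscale (q ^- 2) (d (u ++ [:: gF; gK] ++ v))).
Proof. by relator 11%N. Qed.
Lemma rel_LF u v : eqv (d (u ++ [:: gL; gF] ++ v)) (fscale (q ^- 2) (d (u ++ [:: gF; gL] ++ v))).
Proof. by relator 12%N. Qed.
Lemma rel_KbF u v : eqv (d (u ++ [:: gKb; gF] ++ v)) (fscale (q ^+ 2) (d (u ++ [:: gF; gKb] ++ v))).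
Proof. by relator 13%N. Qed.
Lemma rel_LbF u v : eqv (d (u ++ [:: gLb; gF] ++ v)) (fscale (q ^+ 2) (d (u ++ [:: gF; gLb] ++ v))).
Proof. by relator 14%N. Qed.
Lemma rel_EF u v : eqv (fsub (d (u ++ [:: gE; gF] ++ v)) (d (u ++ [:: gF; gE] ++ v)))
  (fscale a (fsub (fadd (d (u ++ [:: gK] ++ v)) (d (u ++ [:: gL] ++ v)))
                  (fadd (d (u ++ [:: gKb] ++ v)) (d (u ++ [:: gLb] ++ v))))).
Proof. by relator 15%N. Qed.

End Relations.

Section Spanned.
Variables (C : fieldType) (q : C).
Local Notation d := (delta C).
Local Notation eqv := (eqv q).
Implicit Types (f g : fel C).

Definition spanned f :=
  exists s : seq (bidx * C), all admissible (map fst s) /\ eqv f (lincomb s).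

Definition spanw (w : word) := spanned (d w).
Definition spanned_prefix (pre : word) :=
  forall j k, spanw (pre ++ nseq j gE ++ nseq k gF).

Lemma spanned_eqv f g : eqv f g -> spanned g -> spanned f.
Proof. by move=> fg [s [adm gs]]; exists s; split=> //; apply: eqv_trans gs. Qed.

Lemma spanned_zero : spanned fzero.
Proof. by exists [::]; split=> //; apply: eqv_eq. Qed.

Lemma spanned_add f g : spanned f -> spanned g -> spanned (fadd f g).
Proof.
move=> [s1 [adm1 e1]] [s2 [adm2 e2]]; exists (s1 ++ s2); split.
  by rewrite map_cat all_cat adm1 adm2.
by rewrite !lincomb_felc map_cat felc_cat -!lincomb_felc; apply: eqv_add.
Qed.

Lemma spanned_scale c f : spanned f -> spanned (fscale c f).
Proof.
move=> [s [adm e]]; exists (map (fun p => (p.1, c * p.2)) s); split.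
  by rewrite -map_comp.
rewrite lincomb_felc -map_comp.
rewrite (_ : felc _ = felc (map (fun p => (p.1, c * p.2))
                                 (map (fun p => (bword p.1, p.2)) s))).
  by rewrite felc_scale -lincomb_felc; apply: eqv_scale.
by rewrite -map_comp.
Qed.

Lemma spanned_felc (l : seq (word * C)) :
  (forall p, p \in l -> spanw p.1) -> spanned (felc l).
Proof.
elim: l => [|p l IH] H /=; first exact: spanned_zero.
apply: spanned_add; first by apply/spanned_scale/H; rewrite mem_head.
by apply: IH => p' hp; apply: H; rewrite inE hp orbT.
Qed.

Lemma spanw_basis b : admissible b -> spanw (bword b).
Proof.
move=> adm; exists [:: (b, 1)]; split; first by rewrite /= adm.
by apply: eqv_eq; fel_ext; rewrite /= /fadd /fscale /fzero mul1r addr0.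
Qed.

Lemma spanw_eqv w1 w2 : eqv (d w1) (d w2) -> spanw w2 -> spanw w1.
Proof. exact: spanned_eqv. Qed.

Lemma spanw_zero w : eqv (d w) fzero -> spanw w.
Proof. by move/spanned_eqv; apply; apply: spanned_zero. Qed.

Definition swaps (a z : gen) :=
  forall u v, spanw (u ++ a :: z :: v) -> spanw (u ++ z :: a :: v).

Lemma swaps_qcomm a z c : c != 0 ->
  (forall u v, eqv (d (u ++ [:: a; z] ++ v)) (fscale c (d (u ++ [:: z; a] ++ v)))) ->
  swaps a z.
Proof.
move=> c0 rel u v /(spanned_scale c^-1); apply: spanned_eqv.
apply: eqv_sym; apply: eqv_trans (eqv_scale c^-1 (rel u v)) _; apply: eqv_eq.
by fel_ext; rewrite /fscale mulrA mulVf // mul1r.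
Qed.

Lemma move_left a t u v : (forall z, z \in t -> swaps z a) ->
  spanw (u ++ t ++ a :: v) -> spanw (u ++ a :: t ++ v).
Proof.
elim: t u => [//|z t IH] u sw span.
have := IH (u ++ [:: z]) (fun z' hz => sw z' (@mem_behead _ (z :: t) z' hz)).
rewrite -!catA => /(_ span) /=; exact: sw (mem_head _ _) u (t ++ v).
Qed.

Lemma move_right a t u v : (forall z, z \in t -> swaps a z) ->
  spanw (u ++ a :: t ++ v) -> spanw (u ++ t ++ a :: v).
Proof.
elim: t u => [//|z t IH] u sw /(sw z (mem_head _ _) u (t ++ v)) span.
have := IH (u ++ [:: z]) (fun z' hz => sw z' (@mem_behead _ (z :: t) z' hz)).
by rewrite -!catA; apply.
Qed.
End Spanned.

(* The relations among the "toral" generators: x xb and y yb are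
   complementary idempotents with x, xb mutually inverse on the first and
   y, yb on the second. *)
Record torus_rels (C : fieldType) (q : C) (x xb y yb : gen) : Prop := {
  tr_xxbx : forall u v, eqv q (delta C (u ++ [:: x; xb; x] ++ v)) (delta C (u ++ [:: x] ++ v));
  tr_xbxxb : forall u v, eqv q (delta C (u ++ [:: xb; x; xb] ++ v)) (delta C (u ++ [:: xb] ++ v));
  tr_xcomm : forall u v, eqv q (delta C (u ++ [:: x; xb] ++ v)) (delta C (u ++ [:: xb; x] ++ v));
  tr_yyby : forall u v, eqv q (delta C (u ++ [:: y; yb; y] ++ v)) (delta C (u ++ [:: y] ++ v));
  tr_ybyyb : forall u v, eqv q (delta C (u ++ [:: yb; y; yb] ++ v)) (delta C (u ++ [:: yb] ++ v));
  tr_ycomm : forall u v, eqv q (delta C (u ++ [:: y; yb] ++ v)) (delta C (u ++ [:: yb; y] ++ v));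
  tr_sum : forall u v, eqv q (fadd (delta C (u ++ [:: x; xb] ++ v))
                                   (delta C (u ++ [:: y; yb] ++ v))) (delta C (u ++ v)) }.

Lemma torus_rels_swap (C : fieldType) (q : C) x xb y yb :
  torus_rels q x xb y yb -> torus_rels q y yb x xb.
Proof.
case=> h1 h2 h3 h4 h5 h6 h7; split=> // u v.
by apply: eqv_trans (h7 u v); apply: eqv_eq; fel_ext; rewrite /fadd addrC.
Qed.

Lemma torus_rels_KL (C : fieldType) (q : C) : torus_rels q gK gKb gL gLb.
Proof.
by split; [exact: rel_KKbK|exact: rel_KbKKb|exact: rel_KKb|exact: rel_LLbL
  |exact: rel_LbLLb|exact: rel_LLb|exact: rel_PQ].
Qed.

Section TorusProducts.
Variables (C : fieldType) (q : C) (x xb y yb : gen).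
Hypothesis tr : torus_rels q x xb y yb.
Local Notation d := (delta C).
Local Notation eqv := (eqv q).

(* Products across the two idempotent components vanish: x Q = 0, hence
   x y = x yb = xb y = xb yb = 0. *)
Lemma xQ_zero u v : eqv (d (u ++ [:: x; y; yb] ++ v)) fzero.
Proof.
have xP : eqv (d (u ++ [:: x; x; xb] ++ v)) (d (u ++ [:: x] ++ v)).
  apply: eqv_trans (tr_xxbx tr u v).
  by have := tr_xcomm tr (u ++ [:: x]) v; rewrite -!catA.
by have := tr_sum tr (u ++ [:: x]) v; rewrite -!catA => /eqv_cancel; apply.
Qed.

Lemma xy_zero u v : eqv (d (u ++ [:: x; y] ++ v)) fzero.
Proof.
have := tr_yyby tr (u ++ [:: x]) v; rewrite -!catA => /eqv_sym.
by move/eqv_trans; apply; apply: (xQ_zero u (y :: v)).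
Qed.

Lemma xyb_zero u v : eqv (d (u ++ [:: x; yb] ++ v)) fzero.
Proof.
have := tr_ybyyb tr (u ++ [:: x]) v; rewrite -!catA => /eqv_sym /eqv_trans; apply.
have := tr_ycomm tr (u ++ [:: x]) (yb :: v); rewrite -!catA => /eqv_sym /eqv_trans; apply.
exact: (xQ_zero u (yb :: v)).
Qed.

(* xb = xb x xb, so xb z = xb xb (x z) = 0 whenever x z = 0. *)
Lemma xb_zero z : (forall u v, eqv (d (u ++ [:: x; z] ++ v)) fzero) ->
  forall u v, eqv (d (u ++ [:: xb; z] ++ v)) fzero.
Proof.
move=> xz u v; apply: eqv_trans (eqv_sym (tr_xbxxb tr u (z :: v))) _.
have := tr_xcomm tr (u ++ [:: xb]) (z :: v); rewrite -!catA => /eqv_trans; apply.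
by have := xz (u ++ [:: xb; xb]) v; rewrite -!catA.
Qed.
End TorusProducts.

Section TorusCommute.
Variables (C : fieldType) (q : C) (x xb y yb : gen).
Hypothesis tr : torus_rels q x xb y yb.
Local Notation d := (delta C).
Local Notation eqv := (eqv q).
Local Notation toral := [:: x; xb; y; yb].

Lemma toral_comm z1 z2 : z1 \in toral -> z2 \in toral ->
  forall u v, eqv (d (u ++ [:: z1; z2] ++ v)) (d (u ++ [:: z2; z1] ++ v)).
Proof.
have tr' := torus_rels_swap tr.
have zeros a b : (forall u v, eqv (d (u ++ [:: a; b] ++ v)) fzero) ->
    (forall u v, eqv (d (u ++ [:: b; a] ++ v)) fzero) ->
    forall u v, eqv (d (u ++ [:: a; b] ++ v)) (d (u ++ [:: b; a] ++ v)).
  by move=> ab ba u v; apply: eqv_trans (ab u v) (eqv_sym (ba u v)).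
have xy := xy_zero tr; have xyb := xyb_zero tr.
have yx := xy_zero tr'; have yxb := xyb_zero tr'.
have xby := xb_zero tr xy; have xbyb := xb_zero tr xyb.
have ybx := xb_zero tr' yx; have ybxb := xb_zero tr' yxb.
rewrite !inE => /or4P[] /eqP-> /or4P[] /eqP-> u v; try exact: eqv_eq;
  first [ exact: tr_xcomm tr u v | exact: eqv_sym (tr_xcomm tr u v)
        | exact: tr_ycomm tr u v | exact: eqv_sym (tr_ycomm tr u v)
        | apply: zeros u v ]; assumption.
Qed.

Lemma move_toral_right z pre u v : z \in toral -> all (mem toral) pre ->
  spanw q (u ++ z :: pre ++ v) -> spanw q (u ++ pre ++ z :: v).
Proof.
move=> hz /allP hpre; apply: move_right => z' /hpre hz' u' v'.
exact/spanw_eqv/toral_comm.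
Qed.

Hypothesis span_P : forall i, spanned_prefix q (x :: xb :: nseq i x).
Hypothesis span_xb : forall i, (0 < i)%N -> spanned_prefix q (nseq i xb).

Lemma toral_times_prefix z : z \in toral ->
  (forall i, spanned_prefix q (z :: x :: xb :: nseq i x)) /\
  (forall i, (0 < i)%N -> spanned_prefix q (z :: nseq i xb)).
Proof.
have tr' := torus_rels_swap tr.
rewrite !inE => /or4P[] /eqP-> ; split.
- by move=> i j k; apply: spanw_eqv (tr_xcomm tr [:: x] _) (span_P i.+1 j k).
- move=> [//|[|i]] _ j k; first exact: span_P 0 j k.
  apply: spanw_eqv (span_xb (ltn0Sn i) j k).
  exact: eqv_trans (tr_xcomm tr [::] _) (tr_xbxxb tr [::] _).
- move=> [|i] j k.
    by apply: spanw_eqv (span_xb (ltn0Sn 0) j k); exact: tr_xbxxb tr [::] _.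
  apply: spanw_eqv (span_P i j k).
  exact: eqv_trans (tr_xbxxb tr [::] _) (eqv_sym (tr_xcomm tr [::] _)).
- by move=> i hi j k; apply: (span_xb (ltn0Sn i)).
- by move=> i j k; apply/spanw_zero/(xy_zero tr' [::]).
- by move=> [//|i] _ j k; apply/spanw_zero/(xyb_zero tr' [::]).
- by move=> i j k; apply/spanw_zero/(xb_zero tr' (xy_zero tr') [::]).
- by move=> [//|i] _ j k; apply/spanw_zero/(xb_zero tr' (xyb_zero tr') [::]).
Qed.
End TorusCommute.

Section Spanning.
Variables (C : fieldType) (q : C).
Hypothesis q0 : q != 0.
Local Notation d := (delta C).
Local Notation eqv := (eqv q).
Local Notation spanw := (spanw q).
Local Notation spanned_prefix := (spanned_prefix q).
Local Notation toral := [:: gK; gKb; gL; gLb].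

Lemma gen_cases g : g \in toral \/ g = gE \/ g = gF.
Proof.
by case: g => [[|[|[|[|[|[|g]]]]]] hg] //; rewrite !inE;
  [left|left|left|left|right; left|right; right]; rewrite ?orbT //; apply/val_inj.
Qed.

Lemma swaps_E z : z \in toral -> swaps q z gE.
Proof.
have q2 : q ^+ 2 != 0 by rewrite expf_neq0.
have qm2 : q ^- 2 != 0 by rewrite invr_neq0.
rewrite !inE => /or4P[] /eqP->; apply: swaps_qcomm;
  [exact: q2|exact: rel_KE|exact: qm2|exact: rel_KbE
  |exact: q2|exact: rel_LE|exact: qm2|exact: rel_LbE].
Qed.

Lemma swaps_F z : z \in toral -> swaps q z gF.
Proof.
have q2 : q ^+ 2 != 0 by rewrite expf_neq0.
have qm2 : q ^- 2 != 0 by rewrite invr_neq0.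
rewrite !inE => /or4P[] /eqP->; apply: swaps_qcomm;
  [exact: qm2|exact: rel_KF|exact: q2|exact: rel_KbF
  |exact: qm2|exact: rel_LF|exact: q2|exact: rel_LbF].
Qed.

(* F E = E F - (K + L - Kb - Lb)/(q - q^-1) reduces F E to spanned words. *)
Lemma spanw_FE u v : spanw (u ++ gE :: gF :: v) ->
  spanw (u ++ gK :: v) -> spanw (u ++ gL :: v) ->
  spanw (u ++ gKb :: v) -> spanw (u ++ gLb :: v) -> spanw (u ++ gF :: gE :: v).
Proof.
move=> sEF sK sL sKb sLb.
have span_rhs := spanned_add sEF (spanned_scale (- (q - q^-1)^-1)
  (spanned_add (spanned_add sK sL) (spanned_scale (-1) (spanned_add sKb sLb)))).
apply: spanned_eqv span_rhs; move: (inIscale (-1) (rel_EF q u v)); congr inI.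
by fel_ext; rewrite /fsub /fadd /fopp /fscale /=; ring.
Qed.

(* For a toral prefix pre whose products pre E^m F^k and pre z E^m F^k
   (z toral) are spanned, so are the words pre E^m F E^j F^k: induction on j,
   moving F to the right past the E's. *)
Lemma spanw_prefix_F pre : spanned_prefix pre ->
  (forall z, z \in toral -> spanned_prefix (pre ++ [:: z])) ->
  forall j m k, spanw (pre ++ nseq m gE ++ gF :: nseq j gE ++ nseq k gF).
Proof.
move=> span_pre span_z; elim=> [|j IH] m k; first exact: span_pre m k.+1.
have toral_E z : z \in toral -> spanw ((pre ++ nseq m gE) ++ z :: nseq j gE ++ nseq k gF).
  move=> hz; rewrite -catA; apply: move_right.
    by move=> e; rewrite mem_nseq => /andP[_ /eqP->]; apply: swaps_E.
  by have := span_z z hz (m + j) k; rewrite nseqD -!catA.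
rewrite catA; apply: spanw_FE; try by apply: toral_E; rewrite !inE eqxx ?orbT.
by have := IH m.+1 k; rewrite -(addn1 m) nseqD -!catA.
Qed.

(* Every generator times such a prefix is spanned: E commutes through the
   prefix, F does too and then falls under spanw_prefix_F. *)
Lemma letter_times_prefix pre : all (mem toral) pre -> spanned_prefix pre ->
  (forall z, z \in toral -> spanned_prefix (z :: pre)) ->
  forall g, spanned_prefix (g :: pre).
Proof.
move=> tor_pre span_pre span_z g j k.
have [hg|[->|->]] := gen_cases g; first exact: span_z.
- apply: (@move_left _ q gE pre [::]) => [z /(allP tor_pre) /swaps_E //|].
  exact: span_pre j.+1 k.
- apply: (@move_left _ q gF pre [::]) => [z /(allP tor_pre) /swaps_F //|].
  apply: (spanw_prefix_F span_pre _ j 0 k) => z hz m k'.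
  rewrite -catA; apply: (move_toral_right (u := [::]) (torus_rels_KL q) hz tor_pre).
  exact: span_z.
Qed.

Lemma spanw_cons g b : admissible b -> spanw (g :: bword b).
Proof.
have trK := torus_rels_KL q; have trL := torus_rels_swap trK.
have basis t i : (val t == 1%N) || (val t == 3%N) ==> (0 < i)%N ->
  forall j k, spanw (bword (t, i, j, k)) by move=> adm j k; apply: spanw_basis.
have famK := @toral_times_prefix _ q _ _ _ _ trK
  (fun i => basis (@Ordinal 4 0 isT) i isT) (fun i => basis (@Ordinal 4 1 isT) i).
have famL := @toral_times_prefix _ q _ _ _ _ trL
  (fun i => basis (@Ordinal 4 2 isT) i isT) (fun i => basis (@Ordinal 4 3 isT) i).
have toralL z : z \in toral -> z \in [:: gL; gLb; gK; gKb].
  by rewrite !inE => /or4P[]->; rewrite ?orbT.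
case: b => [[[[[|[|[|[|t]]]] ht] i] j] k] //= adm.
- apply: (letter_times_prefix (pre := [:: gK, gKb & nseq i gK])) => //.
  + by rewrite /= all_nseq orbT.
  + exact: (basis (Ordinal ht) i).
  + by move=> z /famK[].
- apply: (letter_times_prefix (pre := nseq i gKb)) => //.
  + by rewrite all_nseq orbT.
  + exact: (basis (Ordinal ht) i).
  + by move=> z /famK[_]; apply.
- apply: (letter_times_prefix (pre := [:: gL, gLb & nseq i gL])) => //.
  + by rewrite /= all_nseq orbT.
  + exact: (basis (Ordinal ht) i).
  + by move=> z /toralL /famL[].
- apply: (letter_times_prefix (pre := nseq i gLb)) => //.
  + by rewrite all_nseq orbT.
  + exact: (basis (Ordinal ht) i).
  + by move=> z /toralL /famL[_]; apply.
Qed.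

Lemma spanw_all w : spanw w.
Proof.
elim: w => [|g w [s [adm e]]].
  apply: spanned_eqv (eqv_sym (rel_PQ q [::] [::])) _.
  apply: spanned_add.
    exact: (@spanw_basis _ q (@Ordinal 4 0 isT, 0, 0, 0)%N).
  exact: (@spanw_basis _ q (@Ordinal 4 2 isT, 0, 0, 0)%N).
have := eqv_lmulw [:: g] e; rewrite lmulw_delta lincomb_felc felc_lmulw -map_comp.
move/spanned_eqv; apply; apply: spanned_felc => _ /mapP[[b c] hbc ->] /=.
by apply: spanw_cons; move/allP: adm; apply; apply/mapP; exists (b, c).
Qed.
End Spanning.

(* Index set of the coefficient vectors on the proposed basis:
   (true, n, j, k) indexes P K^n E^j F^k and (false, n, j, k) indexes
   Q L^n E^j F^k, where negative powers stand for powers of Kb, resp. Lb. *)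
Notation X := (bool * int * nat * nat)%type.

Section Representation.
Variables (C : fieldType) (q : C).
Hypothesis q0 : q != 0.
Local Notation a := (q - q^-1)^-1.

Definition V := X -> C.

(* wt n = q^(2n), the factor picked up by E and F when moving across K^n. *)
Definition wt (n : int) : C := (q ^+ 2) ^ n.

Fixpoint geom (c : C) (j : nat) : C := if j is j'.+1 then 1 + c * geom c j' else 0.

(* E and F
   are moved across K^n with the factors wt n, and
   F E^(j+1) = E^(j+1) F - a sum_i E^i (K + L - Kb - Lb) E^(j-i) brings the
   geometric sums geom (q^-2) and geom (q^2). *)
Definition actK (v : V) : V := fun '(s, n, j, k) => if s then v (s, n - 1, j, k) else 0.
Definition actKb (v : V) : V := fun '(s, n, j, k) => if s then v (s, n + 1, j, k) else 0.
Definition actL (v : V) : V := fun '(s, n, j, k) => if s then 0 else v (s, n - 1, j, k).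
Definition actLb (v : V) : V := fun '(s, n, j, k) => if s then 0 else v (s, n + 1, j, k).
Definition actE (v : V) : V := fun '(s, n, j, k) =>
  (0 < j)%:R * (wt n)^-1 * v (s, n, j.-1, k).
Definition actF (v : V) : V := fun '(s, n, j, k) =>
  (0 < k)%:R * wt n * v (s, n, j, k.-1)
  - a * wt (n - 1) * geom (q ^- 2) j.+1 * v (s, n - 1, j.+1, k)
  + a * wt (n + 1) * geom (q ^+ 2) j.+1 * v (s, n + 1, j.+1, k).

Lemma wt_neq0 n : wt n != 0.
Proof. by rewrite /wt expfz_neq0 // expf_neq0. Qed.

Lemma wtD1 n : wt (n + 1) = q ^+ 2 * wt n.
Proof. by rewrite /wt expfzDr ?expf_neq0 // expr1z mulrC. Qed.

Lemma wtB1 n : wt (n - 1) = q ^- 2 * wt n.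
Proof.
by rewrite -{2}(subrK 1 n) wtD1 mulrA mulVf ?mul1r // expf_neq0.
Qed.

(* Case analysis on an index (s, n, j, k), including s. *)
Ltac vcase x := case: x => [[[[] n] j] k] /=.
Ltac solve_rel := rewrite ?subrK ?addrK ?wtB1 ?wtD1; move: (q - q^-1)^-1 => c;
  field; rewrite ?wt_neq0.

(* The operators satisfy the defining relations of U_{K,L,norm}, each
   stated as a rewrite rule for the leading word of the relator. *)
Lemma act_KKbK v x : actK (actKb (actK v)) x = actK v x.
Proof. by vcase x; rewrite ?subrK. Qed.
Lemma act_KbKKb v x : actKb (actK (actKb v)) x = actKb v x.
Proof. by vcase x; rewrite ?addrK. Qed.
Lemma act_KKb v x : actK (actKb v) x = actKb (actK v) x.
Proof. by vcase x; rewrite ?subrK ?addrK. Qed.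
Lemma act_LLbL v x : actL (actLb (actL v)) x = actL v x.
Proof. by vcase x; rewrite ?subrK. Qed.
Lemma act_LbLLb v x : actLb (actL (actLb v)) x = actLb v x.
Proof. by vcase x; rewrite ?addrK. Qed.
Lemma act_LLb v x : actL (actLb v) x = actLb (actL v) x.
Proof. by vcase x; rewrite ?subrK ?addrK. Qed.
Lemma act_PQ v x : actK (actKb v) x = v x - actL (actLb v) x.
Proof. by vcase x; rewrite ?subrK ?subr0 ?subrr. Qed.
Lemma act_KE v x : actK (actE v) x = q ^+ 2 * actE (actK v) x.
Proof. by vcase x; solve_rel. Qed.
Lemma act_LE v x : actL (actE v) x = q ^+ 2 * actE (actL v) x.
Proof. by vcase x; solve_rel. Qed.
Lemma act_KbE v x : actKb (actE v) x = q ^- 2 * actE (actKb v) x.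
Proof. by vcase x; solve_rel. Qed.
Lemma act_LbE v x : actLb (actE v) x = q ^- 2 * actE (actLb v) x.
Proof. by vcase x; solve_rel. Qed.
Lemma act_KF v x : actK (actF v) x = q ^- 2 * actF (actK v) x.
Proof. by vcase x; solve_rel. Qed.
Lemma act_LF v x : actL (actF v) x = q ^- 2 * actF (actL v) x.
Proof. by vcase x; solve_rel. Qed.
Lemma act_KbF v x : actKb (actF v) x = q ^+ 2 * actF (actKb v) x.
Proof. by vcase x; solve_rel. Qed.
Lemma act_LbF v x : actLb (actF v) x = q ^+ 2 * actF (actLb v) x.
Proof. by vcase x; solve_rel. Qed.
Lemma act_EF v x : actE (actF v) x =
  actF (actE v) x + a * ((actK v x + actL v x) - (actKb v x + actLb v x)).
Proof. by vcase x; case: j => [|j] /=; solve_rel. Qed.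

End Representation.

Section WordAction.
Variables (C : fieldType) (q : C).
Hypothesis q0 : q != 0.
Local Notation V := (V C).

Definition act (g : gen) : V -> V :=
  match val g with
  | 0 => @actK C | 1 => @actKb C | 2 => @actL C | 3 => @actLb C
  | 4 => actE q | _ => actF q
  end%N.

Definition actw (u : word) (v : V) : V := foldr act v u.
Definition act_lc (l : seq (word * C)) (v : V) : V :=
  fun x => \sum_(p <- l) p.2 * actw p.1 v x.

Lemma actw_cat u1 u2 v : actw (u1 ++ u2) v = actw u1 (actw u2 v).
Proof. by rewrite /actw foldr_cat. Qed.

Lemma act_sum g (l : seq (C * V)) :
  act g (fun y => \sum_(p <- l) p.1 * p.2 y) = fun x => \sum_(p <- l) p.1 * act g p.2 x.
Proof.
apply: functional_extensionality => -[[[s n] j] k].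
case: g => [[|[|[|[|[|[|g]]]]]] Hg] //=; rewrite /act /=.
1-4: by case: s => //; rewrite big1 // => p _; rewrite mulr0.
- by rewrite mulr_sumr; apply: eq_bigr => p _; rewrite mulrCA.
- rewrite !mulr_sumr -sumrB -big_split /=; apply: eq_bigr => p _; ring.
Qed.

Lemma actw_sum u (l : seq (C * V)) :
  actw u (fun y => \sum_(p <- l) p.1 * p.2 y) = fun x => \sum_(p <- l) p.1 * actw u p.2 x.
Proof.
elim: u => [//|g u IH] /=; rewrite -/(actw u _) IH.
transitivity (act g (fun y => \sum_(p <- map (fun p => (p.1, actw u p.2)) l) p.1 * p.2 y)).
  by congr act; apply: functional_extensionality => y; rewrite big_map.
by rewrite act_sum; apply: functional_extensionality => x; rewrite big_map.
Qed.

Lemma actw_zero u : actw u (fun _ => 0) = fun _ => 0.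
Proof.
have nil0 : (fun _ => 0) = fun y => \sum_(p <- [::] : seq (C * V)) p.1 * p.2 y.
  by apply: functional_extensionality => y; rewrite big_nil.
by rewrite {1}nil0 actw_sum; apply: functional_extensionality => x; rewrite big_nil.
Qed.

Lemma act_lc_cat l1 l2 v x : act_lc (l1 ++ l2) v x = act_lc l1 v x + act_lc l2 v x.
Proof. exact: big_cat. Qed.

Lemma act_lc_scale c l v x :
  act_lc (map (fun p => (p.1, c * p.2)) l) v x = c * act_lc l v x.
Proof.
by rewrite /act_lc big_map mulr_sumr; apply: eq_bigr => p _; rewrite mulrA.
Qed.

Lemma act_lc_felc l1 l2 : felc l1 = felc l2 -> act_lc l1 = act_lc l2.
Proof.
move=> e; apply: functional_extensionality => v.
by apply: functional_extensionality => x; exact: (felc_sum_eq (fun u => actw u v x) e).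
Qed.

Ltac relator_lc rel :=
  eexists; split;
  [ rewrite /= ?fsubE ?delta_felc;
    repeat (rewrite -felc_scale || rewrite -felc_cat); reflexivity
  | move=> v x; rewrite /act_lc /= !big_cons big_nil /= /act /= rel //; ring ].

Lemma relators_annihilated n : (n < size (relators q))%N ->
  exists l, nth fzero (relators q) n = felc l /\ forall v x, act_lc l v x = 0.
Proof.
case: n => [_|n]; first by relator_lc act_KKbK.
case: n => [_|n]; first by relator_lc act_KbKKb.
case: n => [_|n]; first by relator_lc act_KKb.
case: n => [_|n]; first by relator_lc act_LLbL.
case: n => [_|n]; first by relator_lc act_LbLLb.
case: n => [_|n]; first by relator_lc act_LLb.
case: n => [_|n]; first by relator_lc act_PQ.
case: n => [_|n]; first by relator_lc act_KE.
case: n => [_|n]; first by relator_lc act_LE.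
case: n => [_|n]; first by relator_lc act_KbE.
case: n => [_|n]; first by relator_lc act_LbE.
case: n => [_|n]; first by relator_lc act_KF.
case: n => [_|n]; first by relator_lc act_LF.
case: n => [_|n]; first by relator_lc act_KbF.
case: n => [_|n]; first by relator_lc act_LbF.
case: n => [_|n]; first by relator_lc act_EF.
by [].
Qed.

End WordAction.

Section Independence.
Variables (C : fieldType) (q : C).
Hypothesis q0 : q != 0.
Local Notation V := (V C).
Local Notation actw := (actw q).

Definition annihilated (f : fel C) :=
  exists l, f = felc l /\ forall v x, act_lc q l v x = 0.

Lemma ideal_annihilated f : inI q f -> annihilated f.
Proof.
elim=> [|f1 f2 _ [l1 [-> z1]] _ [l2 [-> z2]]|c f1 _ [l [-> z]]|n a b hn].
- by exists [::]; split=> // v x; rewrite /act_lc big_nil.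
- exists (l1 ++ l2); split=> [|v x]; first by rewrite felc_cat.
  by rewrite act_lc_cat z1 z2 addr0.
- exists (map (fun p => (p.1, c * p.2)) l); split=> [|v x]; first by rewrite felc_scale.
  by rewrite act_lc_scale z mulr0.
- have [l [-> z]] := relators_annihilated q0 hn.
  exists (map (fun p => (a ++ p.1 ++ b, p.2)) l); split=> [|v x]; first exact: felc_ctx.
  transitivity (actw a (fun y => \sum_(p <- map (fun p => (p.2, actw p.1 (actw b v))) l)
                                   p.1 * p.2 y) x).
    by rewrite actw_sum /act_lc !big_map; apply: eq_bigr => p _; rewrite !actw_cat.
  rewrite (_ : (fun y => _) = fun _ => 0) ?actw_zero //.
  by apply: functional_extensionality => y; rewrite big_map; apply: z.
Qed.

(* The coefficient vector of P + Q = 1, and of E^j F^k. *)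
Definition unit_EF (j k : nat) : V := fun '(s, n, j', k') =>
  ((n == 0) && (j' == j) && (k' == k))%:R.

Lemma actw_EF j k : actw (nseq j gE ++ nseq k gF) (unit_EF 0 0) = unit_EF j k.
Proof.
have actF_unit m : actF q (unit_EF 0 m) = unit_EF 0 m.+1.
  apply: functional_extensionality => -[[[s n] [|j']] [|m']] /=;
    rewrite !andbF !mulr0 ?subr0 ?addr0 ?mul0r //= mul1r.
  by case: (eqVneq n 0) => [->|] /=; rewrite ?mulr0 // /wt expr0z mul1r eqSS.
have actE_unit m p : actE q (unit_EF m p) = unit_EF m.+1 p.
  apply: functional_extensionality => -[[[s n] [|m']] p'] /=.
    by rewrite mulr0n !mul0r -[(0 == m.+1)%N]/false andbF.
  by case: (eqVneq n 0) => [->|] /=; rewrite ?mulr0 // /wt expr0z invr1 !mul1r eqSS.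
rewrite actw_cat (_ : actw (nseq k gF) _ = unit_EF 0 k).
  by elim: j => //= j ->; rewrite /act /=.
by elim: k => //= k ->; rewrite /act /=.
Qed.

Lemma actw_shift g (c : bool) (e : int) :
  (forall v s n j k, act q g v (s, n, j, k) = if s == c then v (s, n + e, j, k) else 0) ->
  forall i v s n j k, actw (nseq i g) v (s, n, j, k) =
    if s == c then v (s, n + e *+ i, j, k) else (i == 0)%:R * v (s, n, j, k).
Proof.
move=> act_g; elim=> [|i IH] v s n j k /=; first by rewrite mulr0n addr0 mul1r; case: ifP.
by rewrite act_g; case: ifP => sc; rewrite ?IH ?sc ?mulrS ?addrA ?mul0r.
Qed.

Definition basis_index (b : bidx) : X := let: (t, i, j, k) := b in
  match val t with
  | 0 => (true, i%:Z, j, k)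
  | 1 => (true, - i%:Z, j, k)
  | 2 => (false, i%:Z, j, k)
  | _ => (false, - i%:Z, j, k)
  end%N.

Lemma actw_bword b x : admissible b ->
  actw (bword b) (unit_EF 0 0) x = (x == basis_index b)%:R.
Proof.
have shK := @actw_shift gK true (-1) ltac:(by move=> v [] n j k).
have shKb := @actw_shift gKb true 1 ltac:(by move=> v [] n j k).
have shL := @actw_shift gL false (-1) ltac:(by move=> v [] n j k).
have shLb := @actw_shift gLb false 1 ltac:(by move=> v [] n j k).
case: b => [[[[[|[|[|[|t]]]] ht] i] j] k] //=; case: x => [[[s n] j'] k'] adm;
  rewrite actw_cat actw_EF /act /=; case: s;
  rewrite /= ?subrK ?shK ?shKb ?shL ?shLb /= ?xpair_eqE /=
          ?mulNrn ?subr_eq0 ?addr_eq0 ?natz //.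
all: by rewrite eqn0Ngt adm mul0r.
Qed.
End Independence.

Lemma basis_index_inj b1 b2 : admissible b1 -> admissible b2 ->
  basis_index b1 = basis_index b2 -> b1 = b2.
Proof.
case: b1 => [[[t1 i1] j1] k1]; case: b2 => [[[t2 i2] j2] k2].
have pos_neg (m p : nat) : (0 < p)%N -> m%:Z <> - p%:Z.
  move=> p0 /eqP; rewrite -addr_eq0 -PoszD => /eqP [] /eqP.
  by rewrite addn_eq0 => /andP[_ /eqP p_0]; rewrite p_0 in p0.
case: t1 => [[|[|[|[|t1]]]] h1] //; case: t2 => [[|[|[|[|t2]]]] h2] //= adm1 adm2;
  case=> e1 e2 e3; subst;
  try (by case: (pos_neg _ _ adm2 e1)); try (by case: (pos_neg _ _ adm1 (esym e1)));
  try (move/oppr_inj: e1 => e1); try (case: e1 => ->);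
  by congr (_, _, _, _); apply: val_inj.
Qed.

Lemma coef_extract (C : fieldType) (s : seq (bidx * C)) b c :
  uniq (map fst s) -> (b, c) \in s -> \sum_(p <- s) p.2 * (b == p.1)%:R = c.
Proof.
elim: s => [//|[b' c'] s IH] /= /andP[b's us]; rewrite big_cons inE /=.
case/orP=> [/eqP[-> ->]|bcs].
  rewrite eqxx mulr1 big1_seq ?addr0 // => p /andP[_ ps].
  have /negbTE-> : b' != p.1 by apply: contraNneq b's => ->; apply: map_f.
  by rewrite mulr0.
have /negbTE-> : b != b' by apply: contraNneq b's => <-; apply: (map_f fst bcs).
by rewrite mulr0 add0r IH.
Qed.

Unset Implicit Arguments.
Theorem proposition6 (C : numClosedFieldType) (q : C)
  (hq0 : q != 0) (hq1 : q != 1) (hqm1 : q != -1) :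
  (* spanning: every monomial of the free algebra is, modulo the ideal,
     a finite linear combination of the proposed basis monomials *)
  (forall w : word, exists s : seq (bidx * C),
      all admissible (map fst s) /\ inI q (fsub (delta C w) (lincomb s))) /\
  (* linear independence modulo the ideal *)
  (forall s : seq (bidx * C),
      all admissible (map fst s) -> uniq (map fst s) ->
      inI q (lincomb s) -> all (fun p => p.2 == 0) s).
Proof.
split=> [w|s adm uniq_s /(ideal_annihilated hq0) [l [e zero]]].
  exact: spanw_all hq0 w.
apply/allP => -[b c] bcs /=; apply/eqP.
have adm_s p : p \in s -> admissible p.1 by move=> ps; apply: (allP adm); apply: map_f.
rewrite -(zero (unit_EF C 0 0) (basis_index b)) -(coef_extract uniq_s bcs).
rewrite lincomb_felc in e; rewrite (act_lc_felc q (esym e)) /act_lc big_map.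
apply: eq_big_seq => -[b' c'] b'cs /=; rewrite actw_bword ?(adm_s _ b'cs) //.
suff -> : (basis_index b == basis_index b') = (b == b') by [].
by apply/eqP/eqP => [/(basis_index_inj (adm_s _ bcs) (adm_s _ b'cs))|->].
Qed.
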